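(* Let $G$ be a grid-labelled graph of type $(a,b)$ with at least one edge that is row stratified or column stratified. Then $\rho(G)$ is separable if and only if $G$ satisfies the degree criterion.
   Context: A grid-labelled graph of type $(a,b)$ is a simple graph $G$ whose vertex set is the grid $[a]\times[b]$. If $G$ has $m\ge1$ edges, $\rho(G)=L(G)/(2m)$, where $L(G)$ is the combinatorial Laplacian, viewed as a density matrix on $\mathbb{C}^a\otimes\mathbb{C}^b$ with vertex $(i,j)$ corresponding to $|i\rangle\otimes|j\rangle$; separable means a convex combination of tensor products of density matrices. An edge $\{(i,j),(k,l)\}$ is diagonal if $i\neq k$ and $j\neq l$. $G$ is row stratified if every diagonal edge $\{(i,j),(k,l)\}$ satisfies $|i-k|=1$, and column stratified if every diagonal edge satisfies $|j-l|=1$. The partial transpose $\Gamma(G)$ is the grid-labelled graph with edge set $\{\{(k,j),(i,l)\}:\{(i,j),(k,l)\}\in E(G)\}$; $G$ satisfies the degree criterion if every vertex has the same degree in $G$ and in $\Gamma(G)$. *)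

From HB Require Import structures.
From mathcomp Require Import all_boot all_order all_algebra.
Set Implicit Arguments. Unset Strict Implicit. Unset Printing Implicit Defensive.
Import Order.TTheory GRing.Theory Num.Theory.
Local Open Scope ring_scope.

Notation gridV a b := ('I_a * 'I_b)%type.

Section Grid.
Variables a b : nat.
Implicit Types (adj : rel (gridV a b)) (u v : gridV a b).

Definition simple_graph adj := symmetric adj /\ irreflexive adj.

Definition edges adj : {set {set gridV a b}} :=
  [set [set u; v] | u in [set: gridV a b], v in [set w | adj u w]].

Definition deg adj u : nat := #|[set v | adj u v]|.

Definition diagonal u v : bool := (u.1 != v.1) && (u.2 != v.2).

Definition row_stratified adj : Prop :=
  forall u v, adj u v -> diagonal u v ->
    (u.1.+1 == v.1 :> nat) || (v.1.+1 == u.1 :> nat).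

Definition col_stratified adj : Prop :=
  forall u v, adj u v -> diagonal u v ->
    (u.2.+1 == v.2 :> nat) || (v.2.+1 == u.2 :> nat).

(* partial transpose: {(i,j),(k,l)} in E(G) gives {(k,j),(i,l)} in E(Γ G) *)
Definition ptrans adj : rel (gridV a b) :=
  fun x y => adj (y.1, x.2) (x.1, y.2).

Definition degree_criterion adj : Prop :=
  forall v, deg adj v = deg (ptrans adj) v.

(* identification of the basis of C^(a*b) with |i> ⊗ |j>, via MathComp's
   standard bijection 'I_(a*b) <-> 'I_a * 'I_b (inverse of mxvec_index) *)
Definition grid_of (k : 'I_(a * b)) : gridV a b :=
  enum_val (cast_ord (esym (mxvec_cast a b)) k).

Variable C : numClosedFieldType.

Definition kron (A : 'M[C]_a) (B : 'M[C]_b) : 'M[C]_(a * b) :=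
  \matrix_(k, l) (A (grid_of k).1 (grid_of l).1 * B (grid_of k).2 (grid_of l).2).

Definition laplacian adj : 'M[C]_(a * b) :=
  \matrix_(k, l)
    (if grid_of k == grid_of l then (deg adj (grid_of k))%:R
     else if adj (grid_of k) (grid_of l) then -1 else 0).

Definition rho adj : 'M[C]_(a * b) :=
  ((2 * #|edges adj|)%:R)^-1 *: laplacian adj.
End Grid.

Section Density.
Variable C : numClosedFieldType.

Definition psd n (A : 'M[C]_n) : Prop :=
  forall v : 'rV[C]_n, 0 <= (v *m A *m (map_mx Num.conj v)^T) 0 0.

Definition density n (A : 'M[C]_n) : Prop := psd A /\ \tr A = 1.

Definition separable a b (rho : 'M[C]_(a * b)) : Prop :=
  exists (N : nat) (p : 'I_N -> C) (A : 'I_N -> 'M[C]_a) (B : 'I_N -> 'M[C]_b),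
    [/\ forall k, 0 <= p k,
        \sum_k p k = 1,
        forall k, density (A k) /\ density (B k)
      & rho = \sum_k p k *: kron (A k) (B k)].
End Density.

(* Necessity: if rho = sum_k p_k A_k (x) B_k, the row sums of the partial transpose of
   rho are sum_k p_k (1^T A_k)(B_k 1), with total sum_k p_k (1^T A_k 1)(1^T B_k 1) = 1^T rho 1,
   which vanishes since the rows of a Laplacian sum to zero.  Positivity of each summand
   then kills every row sum of the partial transpose, and at the vertex u that row sum of
   L(G) is deg_G u - deg_Gamma(G) u.

   Sufficiency (for a row stratified G; the column case follows by transposing the grid):
   L(G) is the sum over edges uv of (d_u - d_v)(d_u - d_v)^*, a product state when uv is
   not diagonal.  Comparing the degrees of G and Gamma(G) row by row shows that at every
   vertex as many diagonal edges go down in G as in Gamma(G); hence a permutation of the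
   downward diagonal edges chains them into closed zigzags
   (i,c_0)(i+1,c_1), (i,c_1)(i+1,c_2), ..., (i,c_(r-1))(i+1,c_0),
   and by discrete Fourier analysis with a primitive r-th root of unity the Laplacian of
   such a zigzag is a sum of r product terms. *)

From HB Require Import structures.
From mathcomp Require Import all_boot all_order all_algebra all_fingroup.
From mathcomp Require cyclic separable cyclotomic.
From mathcomp Require Import ring zify.
Set Implicit Arguments. Unset Strict Implicit. Unset Printing Implicit Defensive.
Import Order.TTheory GRing.Theory Num.Theory.
Local Open Scope ring_scope.

Lemma card_set_sum (X : finType) (P : pred X) : #|[set x | P x]| = (\sum_x P x)%N.
Proof. by rewrite -sum1dep_card big_mkcond. Qed.

Lemma sum_pair_fst_eq (Y Z : finType) (y0 : Y) (G : Y -> Z -> bool) :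
  (\sum_(e : Y * Z) ((e.1 == y0) && G e.1 e.2) = \sum_z G y0 z)%N.
Proof.
rewrite -(pair_bigA _ (fun y z => ((y == y0) && G y z : nat))) (bigD1 y0) //=.
rewrite [X in (_ + X)%N]big1 ?addn0; first by apply: eq_bigr => z _; rewrite eqxx.
by move=> y /negbTE y_neq; rewrite big1 // => z _; rewrite y_neq.
Qed.

Lemma sum_shift_periodic (V : zmodType) r (F : nat -> V) :
  (forall s, F (s + r)%N = F s) -> \sum_(s < r) F s.+1 = \sum_(s < r) F s.
Proof.
case: r F => [|n] F Fper; first by rewrite !big_ord0.
by rewrite big_ord_recr big_ord_recl /= -[n.+1]add0n Fper addrC.
Qed.

Definition swap_pair (A B : Type) (x : A * B) : B * A := (x.2, x.1).

Lemma swap_pairK (A B : Type) : cancel (@swap_pair A B) (@swap_pair B A).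
Proof. by case. Qed.

Lemma perm_of_card_fibers (X : finType) (B : eqType) (f1 f2 : X -> B) :
  (forall y, #|[set x | f1 x == y]| = #|[set x | f2 x == y]|) ->
  exists s : {perm X}, forall x, f2 (s x) = f1 x.
Proof.
move=> card_fibers.
pose fib1 y := enum [set x | f1 x == y].
pose fib2 y := enum [set x | f2 x == y].
pose g x := nth x (fib2 (f1 x)) (index x (fib1 (f1 x))).
have x_fib1 x : x \in fib1 (f1 x) by rewrite mem_enum inE.
have idx_lt1 x : (index x (fib1 (f1 x)) < size (fib1 (f1 x)))%N by rewrite index_mem.
have idx_lt2 x : (index x (fib1 (f1 x)) < size (fib2 (f1 x)))%N.
  by rewrite /fib2 -cardE -card_fibers cardE.
have f2g x : f2 (g x) = f1 x.
  by have := mem_nth x (idx_lt2 x); rewrite mem_enum inE => /eqP.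
have g_inj : injective g.
  move=> x x' gxx'.
  have f1x : f1 x = f1 x' by rewrite -f2g gxx' f2g.
  have same_idx : index x (fib1 (f1 x)) = index x' (fib1 (f1 x)).
    have := index_uniq x (idx_lt2 x) (enum_uniq _).
    have := index_uniq x' (idx_lt2 x') (enum_uniq _).
    by rewrite -/(g x) -/(g x') -f1x gxx' => <- <-; rewrite f1x.
  rewrite -(nth_index x (x_fib1 x)) same_idx (set_nth_default x' x) ?f1x ?idx_lt1 //.
  by rewrite nth_index // -f1x.
by exists (perm g_inj) => x; rewrite permE.
Qed.

Lemma perm_expg_inv (X : finType) (D : pred X) (pi : {perm X}) s e :
  (forall e, D (pi e) = D e) -> D ((pi ^+ s)%g e) = D e.
Proof.
by move=> D_pi; elim: s => [|s IHs]; rewrite ?expg0 ?perm1 // expgSr permM D_pi.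
Qed.

Lemma sum_perm_powers (X : finType) (V : zmodType) (D : pred X) (pi : {perm X}) n
    (F : X -> V) : (forall e, D (pi e) = D e) ->
  \sum_(e | D e) \sum_(s < n) F ((pi ^+ s)%g e) = (\sum_(e | D e) F e) *+ n.
Proof.
move=> D_pi; rewrite exchange_big /= (eq_bigr (fun _ => \sum_(e | D e) F e)).
  by rewrite sumr_const card_ord.
move=> s _; rewrite [RHS](reindex_inj (@perm_inj _ (pi ^+ s)%g)) /=.
by apply: eq_bigl => e; rewrite perm_expg_inv.
Qed.

Section PositiveSemidefinite.
Variable C : numClosedFieldType.

Lemma sum_mul_eq_delta (X : finType) (f : X -> C) x0 :
  \sum_x f x * (x == x0)%:R = f x0.
Proof.
rewrite (bigD1 x0) //= eqxx mulr1 big1 ?addr0 // => x /negbTE->.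
by rewrite mulr0.
Qed.

Lemma real_quadratic_ge0_eq0 (x d : C) : 0 <= d ->
  (forall t : C, t \is Num.real -> 0 <= t * x + t ^+ 2 * d) -> x = 0.
Proof.
move=> d_ge0 H.
have d1_gt0 : 0 < d + 1 by rewrite ltr_wpDl.
have d1_neq0 : d + 1 != 0 by rewrite gt_eqF.
have xr : x \is Num.real.
  have := H 1 (rpred1 _); rewrite mul1r expr1n mul1r => /ger0_real xd_r.
  by rewrite -(addrK d x) rpredB // ger0_real.
pose t := - x / (d + 1).
have tr : t \is Num.real by rewrite /t rpredM ?rpredN ?rpredV // gtr0_real.
have := H t tr.
have -> : t * x + t ^+ 2 * d = - (x * x^* / (d + 1) ^+ 2).
  by rewrite (CrealP xr) /t; field.
rewrite oppr_ge0 => le0; apply/eqP; rewrite -mul_conjC_eq0.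
have : x * x^* / (d + 1) ^+ 2 == 0.
  by rewrite eq_le le0 divr_ge0 ?mul_conjC_ge0 ?exprn_ge0 ?ltW.
by rewrite mulf_eq0 invr_eq0 expf_eq0 (negbTE d1_neq0) andbF orbF.
Qed.

(* Testing with real t and with purely imaginary t isolates p + q and p - q. *)
Lemma quadratic_ge0_eq0 (p q d : C) : 0 <= d ->
  (forall t : C, 0 <= t * p + t^* * q + t * t^* * d) -> p = 0 /\ q = 0.
Proof.
move=> d_ge0 H.
have pDq : p + q = 0.
  apply: (real_quadratic_ge0_eq0 d_ge0) => t /CrealP tc.
  by have := H t; rewrite tc; congr (0 <= _); ring.
have pBq : 'i * (p - q) = 0.
  apply: (real_quadratic_ge0_eq0 d_ge0) => t /CrealP tc.
  have := H ('i * t); rewrite rmorphM /= tc conjCi.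
  have -> : 'i * t * (- 'i * t) = t ^+ 2.
    by rewrite -[RHS]mul1r -(opprK 1) -sqrCi; ring.
  by congr (0 <= _); ring.
have {pBq}pBq : p - q = 0.
  by move/eqP: pBq; rewrite mulf_eq0 (negbTE (neq0Ci C)) => /eqP.
have p0 : p = 0.
  have : p *+ 2 = 0 by rewrite mulr2n -{1}(subrK q p) pBq add0r addrC.
  by move/eqP; rewrite mulrn_eq0 => /eqP.
by split=> //; move: pDq; rewrite p0 add0r.
Qed.

Definition qform n (A : 'M[C]_n) (v : 'I_n -> C) :=
  \sum_i \sum_j v i * A i j * (v j)^*.

Lemma psd_qform_ge0 n (A : 'M[C]_n) v : psd A -> 0 <= qform A v.
Proof.
move/(_ (\row_i v i)); rewrite [X in 0 <= X]mxE /qform exchange_big /=.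
congr (0 <= _); apply: eq_bigr => j _; rewrite !mxE mulr_suml.
by apply: eq_bigr => i _; rewrite !mxE.
Qed.

Lemma psd_diag_ge0 n (A : 'M[C]_n) i : psd A -> 0 <= A i i.
Proof.
move/(psd_qform_ge0 (fun k => (k == i)%:R)).
rewrite /qform (eq_bigr (fun k => A k i * (k == i)%:R)) ?sum_mul_eq_delta // => k _.
rewrite (eq_bigr (fun l => (k == i)%:R * A k l * (l == i)%:R)) ?sum_mul_eq_delta.
  by rewrite mulrC.
by move=> l _; rewrite conjC_nat.
Qed.

Lemma qform_add_delta n (A : 'M[C]_n) v t i :
  qform A (fun k => v k + t * (k == i)%:R) =
  qform A v + t * \sum_j A i j * (v j)^* + t^* * \sum_k v k * A k i + t * t^* * A i i.
Proof.
rewrite /qform.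
transitivity (\sum_k \sum_l (v k * A k l * (v l)^* + t * (A k l * (v l)^*) * (k == i)%:R
   + t^* * (v k * A k l) * (l == i)%:R + t * t^* * A k l * (l == i)%:R * (k == i)%:R)).
  apply: eq_bigr => k _; apply: eq_bigr => l _.
  by rewrite rmorphD rmorphM /= conjC_nat; ring.
under eq_bigr do rewrite !big_split /=.
rewrite !big_split /=; congr (_ + _ + _ + _).
- rewrite -(sum_mul_eq_delta (fun k => t * \sum_j A k j * (v j)^*) i) /=.
  by apply: eq_bigr => k _; rewrite mulr_sumr mulr_suml.
- by rewrite mulr_sumr; apply: eq_bigr => k _; rewrite sum_mul_eq_delta.
- rewrite -(sum_mul_eq_delta (fun k => t * t^* * A k i) i).
  by apply: eq_bigr => k _; rewrite -mulr_suml sum_mul_eq_delta.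
Qed.

Lemma psd_qform_eq0 n (A : 'M[C]_n) v : psd A -> qform A v = 0 ->
  (forall i, \sum_j A i j * (v j)^* = 0) /\ (forall i, \sum_k v k * A k i = 0).
Proof.
move=> psdA qv0.
suff zero_at i : \sum_j A i j * (v j)^* = 0 /\ \sum_k v k * A k i = 0.
  by split=> i; case: (zero_at i).
apply: (quadratic_ge0_eq0 (psd_diag_ge0 i psdA)) => t.
by have := psd_qform_ge0 (fun k => v k + t * (k == i)%:R) psdA; rewrite qform_add_delta qv0 add0r.
Qed.

Lemma qform1 n (A : 'M[C]_n) : qform A (fun=> 1) = \sum_i \sum_j A i j.
Proof.
by apply: eq_bigr => i _; apply: eq_bigr => j _; rewrite conjC1 mulr1 mul1r.
Qed.

Lemma psd_sum_ge0 n (A : 'M[C]_n) : psd A -> 0 <= \sum_i \sum_j A i j.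
Proof. by rewrite -qform1; apply: psd_qform_ge0. Qed.

Lemma psd_sum_eq0 n (A : 'M[C]_n) : psd A -> \sum_i \sum_j A i j = 0 ->
  (forall i, \sum_j A i j = 0) /\ (forall j, \sum_i A i j = 0).
Proof.
rewrite -qform1 => psdA /(psd_qform_eq0 psdA)[rows cols]; split=> i.
  by rewrite -[RHS](rows i); apply: eq_bigr => j _; rewrite conjC1 mulr1.
by rewrite -[RHS](cols i); apply: eq_bigr => j _; rewrite mul1r.
Qed.
End PositiveSemidefinite.

Section RankOne.
Variable C : numClosedFieldType.

Definition sqnorm n (x : 'I_n -> C) := \sum_i x i * (x i)^*.

Lemma sqnorm_ge0 n (x : 'I_n -> C) : 0 <= sqnorm x.
Proof. by apply: sumr_ge0 => i _; apply: mul_conjC_ge0. Qed.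

Lemma sqnorm_eq0 n (x : 'I_n -> C) : sqnorm x = 0 -> forall i, x i = 0.
Proof.
move=> x0 i; apply/eqP; rewrite -mul_conjC_eq0; apply/eqP.
by apply: (@psumr_eq0P _ _ predT (fun i => x i * (x i)^*)) => // j _; apply: mul_conjC_ge0.
Qed.

Definition rank1 n (x : 'I_n -> C) : 'M[C]_n := \matrix_(i, j) (x i * (x j)^*).

Lemma density_rank1 n (x : 'I_n -> C) :
  sqnorm x != 0 -> density ((sqnorm x)^-1 *: rank1 x).
Proof.
move=> x_neq0; split.
  move=> w; set z := \sum_i w 0 i * x i.
  have -> : (w *m ((sqnorm x)^-1 *: rank1 x) *m (map_mx Num.conj w)^T) 0 0 =
      (sqnorm x)^-1 * (z * z^*).
    rewrite mxE rmorph_sum /= !mulr_sumr; apply: eq_bigr => j _.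
    rewrite !mxE !mulr_suml mulr_sumr; apply: eq_bigr => i _.
    by rewrite !mxE rmorphM /=; ring.
  by rewrite mulr_ge0 ?invr_ge0 ?sqnorm_ge0 ?mul_conjC_ge0.
rewrite mxtraceZ /mxtrace (eq_bigr (fun i => x i * (x i)^*)) ?mulVf // => i _.
by rewrite mxE.
Qed.
End RankOne.

Lemma exists_prim_root (C : numClosedFieldType) n :
  (0 < n)%N -> exists z : C, n.-primitive_root z.
Proof.
pose p : {poly C} := 'X^n - 1; have [r Dp] := closed_field_poly_normal p.
move=> n_gt0; rewrite (monicP _) ?monicXnsubC // scale1r in Dp.
have rn1 : all n.-unity_root r by apply/allP=> z; rewrite -root_prod_XsubC -Dp.
have sz_r : (n < (size r).+1)%N.
  by rewrite -(size_prod_XsubC r id) -Dp size_XnsubC.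
have [|z] := hasP (cyclic.has_prim_root n_gt0 rn1 _ sz_r); last by exists z.
rewrite -separable.separable_prod_XsubC -Dp cyclotomic.separable_Xn_sub_1 //.
by rewrite pnatr_eq0 -lt0n.
Qed.

Section RootsOfUnity.
Variables (C : numClosedFieldType) (r : nat) (w : C).
Hypothesis prim : r.-primitive_root w.

Lemma prim_root_conj_mul k : (w ^+ k)^* * w ^+ k = 1.
Proof.
have r_gt0 := prim_order_gt0 prim.
have : `|w| ^+ r = 1 by rewrite -normrX prim_expr_order // normr1.
move/eqP; rewrite pexpr_eq1 // => /eqP w1.
by rewrite mulrC -normCK normrX w1 expr1n expr1n.
Qed.

Lemma sum_expr_root1 (z : C) : z ^+ r = 1 -> \sum_(k < r) z ^+ k = (z == 1)%:R * r%:R.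
Proof.
move=> zr; case: eqP => [->|/eqP z_neq1].
  by rewrite mul1r (eq_bigr (fun=> 1)) ?sumr_const ?card_ord // => k _; rewrite expr1n.
have := subrX1 z r; rewrite zr subrr mul0r => /esym /eqP.
by rewrite mulf_eq0 subr_eq0 (negbTE z_neq1) => /eqP.
Qed.

Lemma sum_prim_root_orthogonal (s s' : 'I_r) :
  \sum_(k < r) w ^+ (k * s) * (w ^+ (k * s'))^* = (s == s')%:R * r%:R.
Proof.
pose z := w ^+ s * (w ^+ s')^*.
have zE (k : nat) : w ^+ (k * s) * (w ^+ (k * s'))^* = z ^+ k.
  by rewrite exprMn -rmorphXn -!exprM !(mulnC k).
under eq_bigr do rewrite zE.
rewrite sum_expr_root1; last first.
  rewrite exprMn -rmorphXn -!exprM !(mulnC _ r) !exprM (prim_expr_order prim).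
  by rewrite !expr1n rmorph1 mulr1.
congr (_ * _); congr (nat_of_bool _)%:R.
apply/eqP/eqP => [z1|eq_ss']; last by rewrite /z eq_ss' mulrC prim_root_conj_mul.
apply/eqP; rewrite -val_eqE /= -(modn_small (ltn_ord s)) -(modn_small (ltn_ord s')).
rewrite -(eq_prim_root_expr prim).
by rewrite -[w ^+ s]mulr1 -(prim_root_conj_mul s') mulrA -/z z1 mul1r.
Qed.

Lemma plancherel_prim_root (alpha beta : nat -> C) :
  \sum_(k < r) (\sum_(s < r) w ^+ (k * s) * alpha s) *
               (\sum_(s < r) w ^+ (k * s) * beta s)^* =
  r%:R * \sum_(s < r) alpha s * (beta s)^*.
Proof.
rewrite (eq_bigr (fun k : 'I_r => \sum_(s < r) \sum_(s' < r)
    w ^+ (k * s) * (w ^+ (k * s'))^* * (alpha s * (beta s')^*))); last first.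
  move=> k _; rewrite rmorph_sum big_distrlr /=; apply: eq_bigr => s _.
  by apply: eq_bigr => s' _; rewrite rmorphM /=; ring.
rewrite exchange_big mulr_sumr; apply: eq_bigr => s _ /=.
rewrite exchange_big -(sum_mul_eq_delta (fun s' : 'I_r => r%:R * (alpha s * (beta s')^*)) s).
apply: eq_bigr => s' _; rewrite -mulr_suml sum_prim_root_orthogonal eq_sym.
by ring.
Qed.
End RootsOfUnity.

Section GridEntries.
Variables (C : numClosedFieldType) (a b : nat).
Local Notation T := (gridV a b).

Definition grid_index (u : T) : 'I_(a * b) := cast_ord (mxvec_cast a b) (enum_rank u).

Lemma grid_indexK : cancel grid_index (@grid_of a b).
Proof. by move=> u; rewrite /grid_of /grid_index cast_ordK enum_rankK. Qed.

Lemma grid_ofK : cancel (@grid_of a b) grid_index.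
Proof. by move=> k; rewrite /grid_of /grid_index enum_valK cast_ordKV. Qed.

Definition gentry (M : 'M[C]_(a * b)) (u v : T) := M (grid_index u) (grid_index v).

Lemma gentryP M N : (forall u v, gentry M u v = gentry N u v) -> M = N.
Proof.
by move=> eqMN; apply/matrixP => k l; rewrite -(grid_ofK k) -(grid_ofK l); apply: eqMN.
Qed.

Lemma gentry_laplacian adj u v : gentry (laplacian C adj) u v =
  if u == v then (deg adj u)%:R else if adj u v then -1 else 0.
Proof. by rewrite /gentry mxE !grid_indexK. Qed.

Lemma gentry_kron A B u v : gentry (@kron a b C A B) u v = A u.1 v.1 * B u.2 v.2.
Proof. by rewrite /gentry mxE !grid_indexK. Qed.

Lemma gentry_sum I (r : seq I) (P : pred I) (F : I -> 'M[C]_(a * b)) u v :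
  gentry (\sum_(i <- r | P i) F i) u v = \sum_(i <- r | P i) gentry (F i) u v.
Proof. exact: summxE. Qed.

Lemma gentryZ c M u v : gentry (c *: M) u v = c * gentry M u v.
Proof. exact: mxE. Qed.

Lemma mxtrace_gentry M : \tr M = \sum_u gentry M u u.
Proof.
rewrite /mxtrace (reindex grid_index) /=; last first.
  by exists (@grid_of a b) => k _; rewrite ?grid_indexK ?grid_ofK.
by apply: eq_bigr => u _; rewrite /gentry.
Qed.

End GridEntries.

Section SumsOfProducts.
Variables (C : numClosedFieldType) (a b : nat).
Local Notation T := (gridV a b).

Definition product_term (x : 'I_a -> C) (y : 'I_b -> C) (g h : T) : C :=
  x g.1 * (x h.1)^* * (y g.2 * (y h.2)^*).

Lemma product_termE x y g h :
  product_term x y g h = x g.1 * y g.2 * (x h.1 * y h.2)^*.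
Proof. by rewrite /product_term rmorphM /=; ring. Qed.

Definition sum_of_products (F : T -> T -> C) :=
  exists s : seq (('I_a -> C) * ('I_b -> C)),
    forall g h, F g h = \sum_(q <- s) product_term q.1 q.2 g h.

Lemma eq_sum_of_products F G :
  (forall g h, F g h = G g h) -> sum_of_products F -> sum_of_products G.
Proof. by move=> eqFG [s Fs]; exists s => g h; rewrite -eqFG Fs. Qed.

Lemma sum_of_products_term x y : sum_of_products (product_term x y).
Proof. by exists [:: (x, y)] => g h; rewrite big_seq1. Qed.

Lemma sum_of_productsD F G : sum_of_products F -> sum_of_products G ->
  sum_of_products (fun g h => F g h + G g h).
Proof.
by move=> [s Fs] [s' Gs']; exists (s ++ s') => g h; rewrite big_cat Fs Gs'.
Qed.

Lemma sum_of_productsZ c F : 0 <= c -> sum_of_products F ->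
  sum_of_products (fun g h => c * F g h).
Proof.
move=> c_ge0 [s Fs]; set r := sqrtC c.
have rc : r^* = r by apply/CrealP; rewrite ger0_real ?sqrtC_ge0.
exists [seq ((fun i => r * q.1 i), q.2) | q <- s] => g h.
rewrite big_map Fs mulr_sumr; apply: eq_bigr => q _.
rewrite /product_term /= rmorphM /= rc.
have -> : c = r * r by rewrite -expr2 sqrtCK.
ring.
Qed.

Lemma sum_of_products_sum I (r : seq I) (P : pred I) (F : I -> T -> T -> C) :
  (forall i, P i -> sum_of_products (F i)) ->
  sum_of_products (fun g h => \sum_(i <- r | P i) F i g h).
Proof.
move=> FP; elim: r => [|i r IHr].
  by exists [::] => g h; rewrite !big_nil.
case Pi: (P i); last by apply: eq_sum_of_products IHr => g h; rewrite big_cons Pi.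
by apply: eq_sum_of_products (sum_of_productsD (FP i Pi) IHr) => g h; rewrite big_cons Pi.
Qed.
End SumsOfProducts.

Section SeparableOfProducts.
Variables (C : numClosedFieldType) (a b : nat).
Local Notation T := (gridV a b).
Local Notation factors := (('I_a -> C) * ('I_b -> C))%type.

Lemma sum_of_products_nonzero (F : T -> T -> C) : sum_of_products F ->
  exists2 s : seq factors, all (fun q => (sqnorm q.1 != 0) && (sqnorm q.2 != 0)) s &
    forall g h, F g h = \sum_(q <- s) product_term q.1 q.2 g h.
Proof.
case=> s Fs; exists [seq q <- s | (sqnorm q.1 != 0) && (sqnorm q.2 != 0)].
  exact: filter_all.
move=> g h; rewrite Fs big_filter [RHS]big_mkcond; apply: eq_bigr => q _.
case: ifP => // /nandP[] /negPn /eqP /sqnorm_eq0 q0.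
  by rewrite /product_term !q0 !mul0r.
by rewrite /product_term !q0 mul0r mulr0.
Qed.

(* Each product term x x^* (x) y y^* is a nonnegative multiple of a tensor product of
   pure states; the trace condition turns the weights into a probability vector. *)
Lemma separable_of_sum_of_products (M : 'M[C]_(a * b)) :
  sum_of_products (gentry M) -> \tr M = 1 -> separable M.
Proof.
move=> /sum_of_products_nonzero[s /all_nthP s_neq0 Ms] trM.
pose q k := nth (fun=> 0, fun=> 0) s k.
have sum_q (F : factors -> C) : \sum_(k < size s) F (q k) = \sum_(x <- s) F x.
  by rewrite (big_nth (fun=> 0, fun=> 0)) big_mkord.
have q_neq0 (k : 'I_(size s)) := s_neq0 (fun=> 0, fun=> 0) k (ltn_ord k).
exists (size s), (fun k => sqnorm (q k).1 * sqnorm (q k).2),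
  (fun k => (sqnorm (q k).1)^-1 *: rank1 (q k).1),
  (fun k => (sqnorm (q k).2)^-1 *: rank1 (q k).2); split.
- by move=> k; rewrite mulr_ge0 ?sqnorm_ge0.
- rewrite (sum_q (fun x => sqnorm x.1 * sqnorm x.2)) -trM mxtrace_gentry.
  under [RHS]eq_bigr do rewrite Ms.
  rewrite exchange_big /=; apply: eq_bigr => x _.
  rewrite -(pair_bigA _ (fun i j => product_term x.1 x.2 (i, j) (i, j))) /= big_distrlr /=.
  by apply: eq_bigr => i _; apply: eq_bigr => j _.
- by move=> k; case/andP: (q_neq0 k) => ? ?; split; apply: density_rank1.
apply: gentryP => g h; rewrite Ms gentry_sum -(sum_q (fun x => product_term x.1 x.2 g h)).
apply: eq_bigr => k _; case/andP: (q_neq0 k) => ? ?.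
by rewrite gentryZ gentry_kron !mxE /product_term; field; apply/andP.
Qed.
End SeparableOfProducts.

Section PartialTransposeRowSums.
Variables (C : numClosedFieldType) (a b : nat).
Local Notation T := (gridV a b).

Lemma sum_ptrans_entries (F : T -> T -> C) :
  \sum_u \sum_v F (v.1, u.2) (u.1, v.2) = \sum_u \sum_v F u v.
Proof.
rewrite !pair_bigA /=.
pose exchange_fst (e : T * T) : T * T := ((e.2.1, e.1.2), (e.1.1, e.2.2)).
have exchangeK : involutive exchange_fst by case=> [[? ?] [? ?]].
by rewrite (reindex_inj (inv_inj exchangeK)) /=; apply: eq_bigr => [[[? ?] [? ?]]].
Qed.

Lemma ptrans_row_sum_kron N (p : 'I_N -> C) A B u :
  \sum_v gentry (\sum_k p k *: @kron a b C (A k) (B k)) (v.1, u.2) (u.1, v.2) =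
  \sum_k p k * ((\sum_i A k i u.1) * (\sum_j B k u.2 j)).
Proof.
under eq_bigr do rewrite gentry_sum.
rewrite exchange_big /=; apply: eq_bigr => k _.
under eq_bigr do rewrite gentryZ gentry_kron.
rewrite -mulr_sumr big_distrlr pair_bigA /=.
by congr (_ * _); apply: eq_bigr => -[i j] _.
Qed.

Lemma separable_ptrans_row_sum_eq0 (M : 'M[C]_(a * b)) :
  separable M -> \sum_u \sum_v gentry M u v = 0 ->
  forall u, \sum_v gentry M (v.1, u.2) (u.1, v.2) = 0.
Proof.
case=> [N [p [A [B [p_ge0 _ dAB ->]]]]] sum0 u.
have psdA k : psd (A k) by case: (dAB k) => -[].
have psdB k : psd (B k) by case: (dAB k) => _ [].
have sum_terms : \sum_k p k * ((\sum_i \sum_j A k i j) * (\sum_i \sum_j B k i j)) = 0.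
  apply: (etrans _ sum0); rewrite -sum_ptrans_entries.
  under [RHS]eq_bigr do rewrite ptrans_row_sum_kron.
  rewrite exchange_big /=; apply: eq_bigr => k _.
  rewrite -mulr_sumr -(pair_bigA _ (fun i j => (\sum_l A k l i) * (\sum_l B k j l))) /=.
  by rewrite -big_distrlr /= exchange_big.
rewrite ptrans_row_sum_kron big1 // => k _.
have /eqP : p k * ((\sum_i \sum_j A k i j) * (\sum_i \sum_j B k i j)) = 0.
  apply: (@psumr_eq0P _ _ predT _ _ sum_terms k) => // l _.
  by rewrite !mulr_ge0 ?psd_sum_ge0.
rewrite !mulf_eq0 => /orP[/eqP-> | /orP[] /eqP sum_eq0]; first by rewrite mul0r.
  by have [_ ->] := psd_sum_eq0 (psdA k) sum_eq0; rewrite mul0r mulr0.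
by have [-> _] := psd_sum_eq0 (psdB k) sum_eq0; rewrite !mulr0.
Qed.
End PartialTransposeRowSums.

Section LaplacianRowSums.
Variables (C : numClosedFieldType) (a b : nat).
Local Notation T := (gridV a b).
Implicit Types (adj : rel T) (u v : T).

Lemma natr_deg adj u : (deg adj u)%:R = \sum_v (adj u v)%:R :> C.
Proof. by rewrite /deg card_set_sum natr_sum. Qed.

Lemma sum_diag_indicator (X : finType) (x : X) (d : C) (P : pred X) : P x = false ->
  \sum_y (if y == x then d else if P y then -1 else 0) = d - \sum_y (P y)%:R.
Proof.
move=> Px; rewrite (bigD1 x) //= eqxx [in RHS](bigD1 x) //= Px add0r -sumrN.
by congr (_ + _); apply: eq_bigr => y /negbTE->; case: (P y); rewrite ?oppr0.
Qed.

Lemma laplacian_row_sum adj u : irreflexive adj ->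
  \sum_v gentry (laplacian C adj) u v = 0.
Proof.
move=> irr; rewrite (eq_bigr (fun v => if v == u then (deg adj u)%:R
                                       else if adj u v then -1 else 0)).
  by rewrite sum_diag_indicator ?irr // -natr_deg subrr.
by move=> v _; rewrite gentry_laplacian eq_sym; case: eqP => // ->.
Qed.

Lemma laplacian_ptrans_row_sum adj u : irreflexive adj ->
  \sum_v gentry (laplacian C adj) (v.1, u.2) (u.1, v.2) =
  (deg adj u)%:R - (deg (ptrans adj) u)%:R.
Proof.
move=> irr; rewrite [X in _ - X]natr_deg -(sum_diag_indicator (x := u)); last first.
  by rewrite /ptrans -surjective_pairing.
apply: eq_bigr => v _; rewrite gentry_laplacian /ptrans /=.
have -> : ((v.1, u.2) == (u.1, v.2)) = (v == u).
  by case: u v => [u1 u2] [v1 v2]; rewrite !xpair_eqE /= [u2 == _]eq_sym.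
by case: eqP => [->|]; rewrite -?surjective_pairing.
Qed.

Lemma degree_criterion_of_separable adj : irreflexive adj -> (0 < #|edges adj|)%N ->
  separable (rho C adj) -> degree_criterion adj.
Proof.
move=> irr m_gt0 sep_rho u; apply/eqP.
set c : C := (2 * #|edges adj|)%:R^-1.
have c_neq0 : c != 0 by rewrite invr_eq0 pnatr_eq0 muln_eq0 -lt0n m_gt0.
have rhoE v w : gentry (rho C adj) v w = c * gentry (laplacian C adj) v w.
  exact: gentryZ.
have total0 : \sum_v \sum_w gentry (rho C adj) v w = 0.
  apply: big1 => v _; under eq_bigr do rewrite rhoE.
  by rewrite -mulr_sumr laplacian_row_sum ?mulr0.
have := separable_ptrans_row_sum_eq0 sep_rho total0 u.
under eq_bigr do rewrite rhoE.
rewrite -mulr_sumr laplacian_ptrans_row_sum // => /eqP.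
by rewrite mulf_eq0 (negbTE c_neq0) subr_eq0 eqr_nat.
Qed.
End LaplacianRowSums.

Section EdgeForms.
Variables (C : numClosedFieldType) (a b : nat).
Local Notation T := (gridV a b).
Implicit Types (adj : rel T) (u v g h : T).

Definition edge_vec u v g : C := (g == u)%:R - (g == v)%:R.

Definition edge_form u v g h : C := edge_vec u v g * edge_vec u v h.

Lemma edge_formC u v g h : edge_form v u g h = edge_form u v g h.
Proof. by rewrite /edge_form /edge_vec; ring. Qed.

Lemma gentry_laplacian_irr adj g h : irreflexive adj ->
  gentry (laplacian C adj) g h = (g == h)%:R * (deg adj g)%:R - (adj g h)%:R.
Proof.
move=> irr; rewrite gentry_laplacian.
case: eqP => [->|_]; first by rewrite irr subr0 mul1r.
by rewrite mul0r add0r; case: (adj g h); rewrite ?oppr0.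
Qed.

Lemma sum_edge_form adj g h : symmetric adj -> irreflexive adj ->
  \sum_u \sum_v (adj u v)%:R * edge_form u v g h = gentry (laplacian C adj) g h *+ 2.
Proof.
move=> sym irr; rewrite gentry_laplacian_irr // mulr2n.
have out_edges : \sum_u \sum_v (adj u v)%:R * ((u == g)%:R * (u == h)%:R) =
    (g == h)%:R * (deg adj g)%:R :> C.
  rewrite natr_deg -(sum_mul_eq_delta (fun u => (u == h)%:R * \sum_v (adj u v)%:R) g) /=.
  apply: eq_bigr => u _; rewrite mulr_sumr mulr_suml.
  by apply: eq_bigr => v _; ring.
have cross_edges : \sum_u \sum_v (adj u v)%:R * ((u == g)%:R * (v == h)%:R) =
    (adj g h)%:R :> C.
  rewrite -(sum_mul_eq_delta (fun u => (adj u h)%:R) g); apply: eq_bigr => u _.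
  rewrite -(sum_mul_eq_delta (fun v => (adj u v)%:R) h) /= mulr_suml.
  by apply: eq_bigr => v _; ring.
transitivity (\sum_u \sum_v (((adj u v)%:R : C) * ((u == g)%:R * (u == h)%:R)
  + (adj v u)%:R * ((v == g)%:R * (v == h)%:R)
  - (adj u v)%:R * ((u == g)%:R * (v == h)%:R) - (adj v u)%:R * ((v == g)%:R * (u == h)%:R))).
  apply: eq_bigr => u _; apply: eq_bigr => v _.
  by rewrite /edge_form /edge_vec sym ![g == _]eq_sym ![h == _]eq_sym; ring.
under eq_bigr do rewrite !big_split /= !sumrN.
rewrite !big_split /= !sumrN out_edges cross_edges.
rewrite [X in _ + X - _ - _]exchange_big [X in _ - X]exchange_big /= out_edges cross_edges sym.
by ring.
Qed.

Lemma natr_eq_pair u g : (g == u)%:R = (g.1 == u.1)%:R * (g.2 == u.2)%:R :> C.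
Proof.
case: g u => [g1 g2] [u1 u2]; rewrite xpair_eqE /=.
by case: (g1 == u1); case: (g2 == u2); rewrite ?mul1r ?mul0r.
Qed.

Lemma sum_of_products_edge_form u v : ~~ diagonal u v -> sum_of_products (edge_form u v).
Proof.
rewrite negb_and !negbK => /orP[] /eqP same.
- apply: eq_sum_of_products (sum_of_products_term (fun i => (i == u.1)%:R)
      (fun j => (j == u.2)%:R - (j == v.2)%:R)) => g h.
  by rewrite /edge_form /edge_vec /product_term !natr_eq_pair -same !rmorphB /= !conjC_nat; ring.
- apply: eq_sum_of_products (sum_of_products_term (fun i => (i == u.1)%:R - (i == v.1)%:R)
      (fun j => (j == u.2)%:R)) => g h.
  by rewrite /edge_form /edge_vec /product_term !natr_eq_pair -same !rmorphB /= !conjC_nat; ring.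
Qed.

Lemma diagonalC u v : diagonal v u = diagonal u v.
Proof. by rewrite /diagonal eq_sym [v.2 == _]eq_sym. Qed.

Definition down_diag adj : pred (T * T) :=
  fun e => [&& adj e.1 e.2, diagonal e.1 e.2 & e.2.1 == e.1.1.+1 :> nat].

Lemma sum_diag_edge_form adj g h : symmetric adj -> row_stratified adj ->
  \sum_(e | adj e.1 e.2 && diagonal e.1 e.2) edge_form e.1 e.2 g h =
  (\sum_(e | down_diag adj e) edge_form e.1 e.2 g h) *+ 2.
Proof.
move=> sym rs; rewrite (bigID (fun e : T * T => e.2.1 == e.1.1.+1 :> nat)) /= mulr2n.
congr (_ + _); first by apply: eq_bigl => e; rewrite /down_diag andbA.
rewrite (reindex_inj (can_inj (@swap_pairK T T))) /=.
apply: eq_big => [[u v] /= | [u v] _]; last exact: edge_formC.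
rewrite /down_diag /= sym diagonalC.
case avu: (adj u v) => //=; case d: (diagonal u v) => //=.
by case/orP: (rs u v avu d) => /eqP <-; lia.
Qed.

Lemma laplacian_split adj g h : simple_graph adj -> row_stratified adj ->
  gentry (laplacian C adj) g h =
  2%:R^-1 * \sum_(e | adj e.1 e.2 && ~~ diagonal e.1 e.2) edge_form e.1 e.2 g h
  + \sum_(e | down_diag adj e) edge_form e.1 e.2 g h.
Proof.
move=> [sym irr] rs.
have two_neq0 : (2%:R : C) != 0 by rewrite pnatr_eq0.
apply: (mulfI two_neq0); rewrite mulrDr mulrA mulfV // mul1r !mulr_natl.
rewrite -sum_diag_edge_form // -sum_edge_form // pair_bigA /= addrC.
rewrite (bigID (fun e : T * T => diagonal e.1 e.2)) /=.
by congr (_ + _); rewrite big_mkcond [RHS]big_mkcond; apply: eq_bigr => e _;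
  case: (adj e.1 e.2); case: (diagonal e.1 e.2); rewrite ?mul1r ?mul0r.
Qed.
End EdgeForms.

Section Zigzag.
Variables (C : numClosedFieldType) (a b r : nat) (w : C).
Hypothesis prim : r.-primitive_root w.
Variables (i i' : 'I_a) (c : nat -> 'I_b).
Hypothesis c_periodic : forall s, c (s + r)%N = c s.
Local Notation T := (gridV a b).

(* zigzag_row k (x) zigzag_col k is the k-th Fourier mode of the edge vectors of the zigzag
   (zigzag_tensor), so by Plancherel the modes add up to r times its Laplacian. *)
Definition zigzag_row (k : nat) (l : 'I_a) : C := (l == i)%:R - (w ^+ k)^* * (l == i')%:R.

Definition zigzag_col (k : nat) (j : 'I_b) : C := \sum_(s < r) w ^+ (k * s) * (j == c s)%:R.

Lemma zigzag_tensor k (g : T) : zigzag_row k g.1 * zigzag_col k g.2 =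
  \sum_(s < r) w ^+ (k * s) * edge_vec C (i, c s) (i', c s.+1) g.
Proof.
have shifted :
    \sum_(s < r) w ^+ (k * s) * (g.2 == c s.+1)%:R = (w ^+ k)^* * zigzag_col k g.2.
  rewrite /zigzag_col
    -(@sum_shift_periodic _ _ (fun s => w ^+ (k * s) * (g.2 == c s)%:R)); last first.
    move=> s; rewrite c_periodic mulnDr exprD [w ^+ (k * r)]exprM exprAC.
    by rewrite (prim_expr_order prim) expr1n mulr1.
  rewrite mulr_sumr; apply: eq_bigr => s _.
  by rewrite mulnS exprD !mulrA (prim_root_conj_mul prim) mul1r.
rewrite /edge_vec; under eq_bigr do rewrite !natr_eq_pair /= mulrBr.
have -> : zigzag_row k g.1 * zigzag_col k g.2 =
    (g.1 == i)%:R * zigzag_col k g.2 - (g.1 == i')%:R * ((w ^+ k)^* * zigzag_col k g.2).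
  by rewrite /zigzag_row; ring.
rewrite -shifted sumrB /zigzag_col !mulr_sumr.
by congr (_ - _); apply: eq_bigr => s _; ring.
Qed.
Lemma sum_zigzag_products g h :
  \sum_(k < r) product_term (zigzag_row k) (zigzag_col k) g h =
  r%:R * \sum_(s < r) edge_form C (i, c s) (i', c s.+1) g h.
Proof.
under eq_bigr do rewrite product_termE !zigzag_tensor.
rewrite (plancherel_prim_root prim (fun s => edge_vec C (i, c s) (i', c s.+1) g)
  (fun s => edge_vec C (i, c s) (i', c s.+1) h)).
congr (_ * _); apply: eq_bigr => s _.
by rewrite /edge_form [in X in _ * X]/edge_vec rmorphB /= !conjC_nat.
Qed.

Lemma sum_of_products_zigzag :
  sum_of_products (fun g h => \sum_(s < r) edge_form C (i, c s) (i', c s.+1) g h).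
Proof.
have r_neq0 : r%:R != 0 :> C by rewrite pnatr_eq0 -lt0n (prim_order_gt0 prim).
have products :
    sum_of_products (fun g h => \sum_(k < r) product_term (zigzag_row k) (zigzag_col k) g h).
  by apply: sum_of_products_sum => k _; apply: sum_of_products_term.
apply: eq_sum_of_products (sum_of_productsZ (c := r%:R^-1) _ products) => [g h|].
  by rewrite sum_zigzag_products mulrA mulVf ?mul1r.
by rewrite invr_ge0 ler0n.
Qed.
End Zigzag.

Section DiagonalBalance.
Variables (a b : nat) (adj : rel (gridV a b)).
Local Notation T := (gridV a b).
Hypotheses (sym : symmetric adj) (rs : row_stratified adj).

Definition down_deg (u : T) := (\sum_v down_diag adj (u, v))%N.
Definition up_deg (u : T) := (\sum_v down_diag adj (v, u))%N.
Definition down_deg_ptrans (u : T) := (\sum_v down_diag adj ((u.1, v.2), (v.1, u.2)))%N.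
Definition up_deg_ptrans (u : T) := (\sum_v down_diag adj ((v.1, u.2), (u.1, v.2)))%N.

Lemma adj_split_diag (u v : T) : adj u v =
  ((adj u v && ~~ diagonal u v) + down_diag adj (u, v) + down_diag adj (v, u))%N :> nat.
Proof.
rewrite /down_diag /= (sym v u) (diagonalC u v).
case avu: (adj u v) => //=; case d: (diagonal u v) => //=.
by move: (rs avu d); case: eqP; case: eqP; case: eqP; case: eqP => /=; lia.
Qed.

Lemma ptrans_split_diag (u v : T) : ptrans adj u v =
  ((ptrans adj u v && ~~ diagonal u v) + down_diag adj ((u.1, v.2), (v.1, u.2))
   + down_diag adj ((v.1, u.2), (u.1, v.2)))%N :> nat.
Proof.
have d_ptrans : diagonal (v.1, u.2) (u.1, v.2) = diagonal u v.
  by rewrite /diagonal /= eq_sym [u.2 == _]eq_sym.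
rewrite /down_diag /ptrans /= (sym (u.1, v.2)) (diagonalC (v.1, u.2)) d_ptrans.
case avu: (adj (v.1, u.2) (u.1, v.2)) => //=; case d: (diagonal u v) => //=.
have := rs avu; rewrite d_ptrans => /(_ d) /=.
by case: eqP; case: eqP; case: eqP; case: eqP => /=; lia.
Qed.

Lemma ptrans_nondiag (u v : T) : ~~ diagonal u v -> ptrans adj u v = adj u v.
Proof.
case: u v => [u1 u2] [v1 v2]; rewrite /diagonal /ptrans /= negb_and !negbK.
by case/orP => /eqP <-; rewrite // sym.
Qed.

Lemma degree_criterion_diag u : degree_criterion adj ->
  (down_deg u + up_deg u = down_deg_ptrans u + up_deg_ptrans u)%N.
Proof.
move=> /(_ u); rewrite /deg !card_set_sum.
rewrite (eq_bigr _ (fun v _ => adj_split_diag u v)).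
rewrite (eq_bigr _ (fun v _ => ptrans_split_diag u v)) !big_split /= -!addnA.
suff -> : (\sum_v (ptrans adj u v && ~~ diagonal u v) =
           \sum_v (adj u v && ~~ diagonal u v))%N by move/addnI.
by apply: eq_bigr => v _; case d: (diagonal u v); rewrite ?andbF // ptrans_nondiag ?d.
Qed.

Lemma sum_down_diag_fix_row (f : T -> T * T) (i0 : 'I_a) :
  (forall v, down_diag adj (f v) -> v.1 = i0) ->
  (\sum_v down_diag adj (f v) = \sum_l down_diag adj (f (i0, l)))%N.
Proof.
move=> row_i0; rewrite -(sum_pair_fst_eq i0 (fun x l => down_diag adj (f (x, l)))).
apply: eq_bigr => -[x l] _ /=.
case D: (down_diag adj _); rewrite ?andbF ?andbT //.
by have /= -> := row_i0 _ D; rewrite eqxx.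
Qed.

Section SuccessiveRows.
Variables (i k : 'I_a) (j : 'I_b).
Hypothesis k_succ : k = i.+1 :> nat.

Let rowE (e : T * T) : down_diag adj e -> e.2.1 = e.1.1.+1 :> nat.
Proof. by case/and3P=> _ _ /eqP. Qed.

Let upper_row (e : T * T) : down_diag adj e -> e.2.1 = k -> e.1.1 = i.
Proof.
by move=> /rowE De ek; apply: val_inj => /=; move: De; rewrite ek k_succ => -[].
Qed.

Let lower_row (e : T * T) : down_diag adj e -> e.1.1 = i -> e.2.1 = k.
Proof. by move=> /rowE De ei; apply: val_inj => /=; rewrite De ei k_succ. Qed.

Lemma up_deg_succ : up_deg (k, j) = down_deg_ptrans (i, j).
Proof.
rewrite /up_deg (sum_down_diag_fix_row (i0 := i)) => [|v /upper_row]; last exact.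
by rewrite /down_deg_ptrans (sum_down_diag_fix_row (i0 := k)) => [|v /lower_row]; last exact.
Qed.

Lemma up_deg_ptrans_succ : up_deg_ptrans (k, j) = down_deg (i, j).
Proof.
rewrite /up_deg_ptrans (sum_down_diag_fix_row (i0 := i)) => [|v /upper_row]; last exact.
by rewrite /down_deg (sum_down_diag_fix_row (i0 := k)) => [|v /lower_row]; last exact.
Qed.
End SuccessiveRows.

Lemma up_deg_row0 (u : T) : u.1 = 0 :> nat -> up_deg u = 0%N /\ up_deg_ptrans u = 0%N.
Proof. by move=> u0; split; apply: big1 => v _; rewrite /down_diag /= u0 !andbF. Qed.

(* Nondiagonal edges are the same in G and Gamma(G), and the diagonal edges going up from
   row i+1 correspond to those going down from row i, so the balance propagates
   from row 0 downwards. *)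
Lemma down_deg_ptransE : degree_criterion adj -> forall u, down_deg u = down_deg_ptrans u.
Proof.
move=> dc [[n n_lt] j]; elim: n n_lt j => [|n IHn] n_lt j.
  have [up0 upt0] := up_deg_row0 (u := (Ordinal n_lt, j)) erefl.
  by have := degree_criterion_diag (Ordinal n_lt, j) dc; rewrite up0 upt0 !addn0.
have := degree_criterion_diag (Ordinal n_lt, j) dc.
pose i := Ordinal (ltnW n_lt).
rewrite (up_deg_succ (i := i)) // (up_deg_ptrans_succ (i := i)) //.
by rewrite IHn => /addIn.
Qed.
End DiagonalBalance.

Section PermutationCycles.
Variables (C : numClosedFieldType) (a b : nat).
Local Notation T := (gridV a b).
Variables (D : pred (T * T)) (pi : {perm T * T}).
Hypothesis D_pi : forall e, D (pi e) = D e.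
Hypothesis pi_fst : forall e, D e -> (pi e).1 = (e.1.1, e.2.2).
Hypothesis pi_row : forall e, D e -> (pi e).2.1 = e.2.1.

Lemma expg_rows s e : D e ->
  ((pi ^+ s)%g e).1.1 = e.1.1 /\ ((pi ^+ s)%g e).2.1 = e.2.1.
Proof.
move=> De; elim: s => [|s [IH1 IH2]]; first by rewrite expg0 perm1.
by rewrite expgSr permM pi_fst ?pi_row ?perm_expg_inv.
Qed.

(* The orbit of an edge is a closed zigzag: each edge starts, in the upper row,
   at the column where the previous one ended in the lower row. *)
Lemma expg_zigzag s e : D e -> (pi ^+ s)%g e =
  ((e.1.1, ((pi ^+ s)%g e).1.2), (e.2.1, ((pi ^+ s.+1)%g e).1.2)).
Proof.
move=> De; have [row1 row2] := expg_rows s De.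
rewrite expgSr permM pi_fst ?perm_expg_inv //= -row1 -row2.
by case: ((pi ^+ s)%g e) => -[? ?] [? ?].
Qed.

Lemma sum_of_products_perm_cycles :
  sum_of_products (fun g h => \sum_(e | D e) edge_form C e.1 e.2 g h).
Proof.
pose r := #[pi]%g; have r_gt0 : (0 < r)%N := order_gt0 pi.
have [w prim] := exists_prim_root C r_gt0.
have r_neq0 : r%:R != 0 :> C by rewrite pnatr_eq0 -lt0n.
have orbits : sum_of_products (fun g h =>
    \sum_(e | D e) \sum_(s < r) edge_form C ((pi ^+ s)%g e).1 ((pi ^+ s)%g e).2 g h).
  apply: sum_of_products_sum => e De.
  apply: eq_sum_of_products (sum_of_products_zigzag prim e.1.1 e.2.1
            (c := fun s => ((pi ^+ s)%g e).1.2) _) => [g h|s].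
    by apply: eq_bigr => s _; rewrite [in RHS](expg_zigzag s De).
  by rewrite expgD (expg_order pi) mulg1.
apply: eq_sum_of_products (sum_of_productsZ (c := r%:R^-1) _ orbits) => [g h|].
  rewrite (@sum_perm_powers _ _ _ _ _ (fun x => edge_form C x.1 x.2 g h)) //.
  by rewrite -[(\sum_(e | D e) _) *+ r]mulr_natl mulrA mulVf ?mul1r.
by rewrite invr_ge0 ler0n.
Qed.
End PermutationCycles.

Section RowStratified.
Variables (a b : nat) (adj : rel (gridV a b)).
Local Notation T := (gridV a b).
Hypotheses (sym : symmetric adj) (rs : row_stratified adj).
Hypothesis dc : degree_criterion adj.

(* The balance says that e |-> e.1 and e |-> (e.1.1, e.2.2) have fibres of the same size
   on the downward diagonal edges. *)
Lemma exists_down_diag_perm : exists pi : {perm T * T}, forall e,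
  down_diag adj (pi e) = down_diag adj e /\
  (down_diag adj e -> (pi e).1 = (e.1.1, e.2.2)).
Proof.
pose f1 (e : T * T) := if down_diag adj e then Some (e.1.1, e.2.2) else None.
pose f2 (e : T * T) := if down_diag adj e then Some e.1 else None.
have [|pi f2_pi] := @perm_of_card_fibers _ _ f1 f2.
  case=> [u|]; rewrite !card_set_sum; last first.
    by apply: eq_bigr => e _; rewrite /f1 /f2; case: (down_diag adj e).
  transitivity (down_deg_ptrans adj u); last first.
    rewrite -(down_deg_ptransE sym rs dc).
    apply: etrans (esym (sum_pair_fst_eq u (fun x y => down_diag adj (x, y)))) _.
    apply: eq_bigr => -[x y] _; rewrite /f2 /=.
    by case: (down_diag _ _); rewrite ?andbF ?andbT.
  pose psi (e : T * T) : T * T := ((e.1.1, e.2.2), (e.2.1, e.1.2)).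
  have psiK : involutive psi by case=> [[? ?] [? ?]].
  rewrite (reindex_inj (inv_inj psiK)).
  apply: etrans _ (sum_pair_fst_eq u (fun x y => down_diag adj ((x.1, y.2), (y.1, x.2)))).
  apply: eq_bigr => -[[x1 x2] [y1 y2]] _; rewrite /f1 /psi /=.
  by case: (down_diag _ _); rewrite ?andbF ?andbT.
exists pi => e; have := f2_pi e; rewrite /f1 /f2.
by case: (down_diag adj e); case: (down_diag adj (pi e)) => // -[].
Qed.
End RowStratified.

Lemma sum_of_products_laplacian_row (C : numClosedFieldType) a b (adj : rel (gridV a b)) :
  simple_graph adj -> row_stratified adj -> degree_criterion adj ->
  sum_of_products (gentry (laplacian C adj)).
Proof.
move=> [sym irr] rs dc.
have [pi pi_down] := exists_down_diag_perm sym rs dc.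
have D_pi e : down_diag adj (pi e) = down_diag adj e by case: (pi_down e).
have pi_fst e : down_diag adj e -> (pi e).1 = (e.1.1, e.2.2) by case: (pi_down e).
have pi_row e : down_diag adj e -> (pi e).2.1 = e.2.1.
  move=> De; apply: val_inj => /=; have /and3P[_ _ /eqP->] := De.
  have /and3P[_ _ /eqP->] : down_diag adj (pi e) by rewrite D_pi.
  by rewrite pi_fst.
have nondiag : sum_of_products (fun g h => 2%:R^-1 *
    \sum_(e | adj e.1 e.2 && ~~ diagonal e.1 e.2) edge_form C e.1 e.2 g h).
  apply: sum_of_productsZ; first by rewrite invr_ge0 ler0n.
  by apply: sum_of_products_sum => e /andP[_]; apply: sum_of_products_edge_form.
apply: eq_sum_of_products (sum_of_productsD nondiag
  (sum_of_products_perm_cycles C D_pi pi_fst pi_row)) => g h.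
by rewrite laplacian_split.
Qed.

Section Transpose.
Variables (C : numClosedFieldType) (a b : nat) (adj : rel (gridV a b)).

Definition transpose_graph : rel (gridV b a) := fun x y => adj (swap_pair x) (swap_pair y).

Lemma deg_transpose x : deg transpose_graph x = deg adj (swap_pair x).
Proof.
rewrite /deg !card_set_sum (reindex (@swap_pair _ _)) /=; last first.
  by exists (@swap_pair _ _) => y _; rewrite swap_pairK.
by apply: eq_bigr => y _; rewrite /transpose_graph swap_pairK.
Qed.

Lemma simple_graph_transpose : simple_graph adj -> simple_graph transpose_graph.
Proof.
by move=> [sym irr]; split=> [x y|x]; rewrite /transpose_graph; [apply: sym | apply: irr].
Qed.

Lemma row_stratified_transpose : col_stratified adj -> row_stratified transpose_graph.
Proof. by move=> cs x y /cs; rewrite /diagonal /= andbC; apply. Qed.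

Lemma degree_criterion_transpose :
  symmetric adj -> degree_criterion adj -> degree_criterion transpose_graph.
Proof.
move=> sym dc x; rewrite deg_transpose dc /deg !card_set_sum.
rewrite [RHS](reindex (@swap_pair _ _)) /=; last first.
  by exists (@swap_pair _ _) => y _; rewrite swap_pairK.
by apply: eq_bigr => y _; rewrite /ptrans /transpose_graph /= sym.
Qed.

Lemma gentry_laplacian_transpose g h : gentry (laplacian C adj) g h =
  gentry (laplacian C transpose_graph) (swap_pair g) (swap_pair h).
Proof.
rewrite !gentry_laplacian deg_transpose /transpose_graph !swap_pairK.
by rewrite (can_eq (@swap_pairK _ _)).
Qed.
End Transpose.

Lemma sum_of_products_transpose (C : numClosedFieldType) a b
    (F : gridV b a -> gridV b a -> C) :
  sum_of_products F -> sum_of_products (fun g h => F (swap_pair g) (swap_pair h)).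
Proof.
case=> s Fs; exists [seq (q.2, q.1) | q <- s] => g h.
by rewrite Fs big_map; apply: eq_bigr => q _; rewrite /product_term /=; ring.
Qed.

Section Handshake.
Variables (a b : nat) (adj : rel (gridV a b)).
Local Notation T := (gridV a b).
Hypotheses (sym : symmetric adj) (irr : irreflexive adj).

Let rk (u : T) : nat := enum_rank u.

Let rk_neq u v : adj u v -> rk u != rk v.
Proof. by move=> uv; apply: contraTneq uv => /val_inj/enum_rank_inj->; rewrite irr. Qed.

Let oriented := [set e : T * T | adj e.1 e.2 && (rk e.1 < rk e.2)%N].

Lemma card_edges_oriented : #|edges adj| = #|oriented|.
Proof.
pose ends (e : T * T) : {set T} := [set e.1; e.2].
have -> : edges adj = ends @: oriented.
  apply/setP => S; apply/imset2P/imsetP => [[u v _]|[e]].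
    rewrite inE => uv ->; have := rk_neq uv; case: ltngtP => // [uv_lt|vu_lt] _.
      by exists (u, v); rewrite // inE /= uv uv_lt.
    by exists (v, u); rewrite /ends /= 1?setUC // inE /= sym uv vu_lt.
  by rewrite inE => /andP[uv _] ->; exists e.1 e.2; rewrite ?inE.
apply: card_in_imset => -[u v] [u' v']; rewrite !inE /ends /= => /andP[_ lt] /andP[_ lt'] E.
have : u \in [set u'; v'] by rewrite -E !inE eqxx.
have : v \in [set u'; v'] by rewrite -E !inE eqxx orbT.
by rewrite !inE => /orP[] /eqP eu /orP[] /eqP ev; subst => //; lia.
Qed.

Lemma sum_deg : (\sum_u deg adj u = 2 * #|edges adj|)%N.
Proof.
rewrite card_edges_oriented card_set_sum mul2n -addnn.
under eq_bigr do rewrite /deg card_set_sum.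
rewrite pair_bigA /= (eq_bigr (fun e : T * T => (adj e.1 e.2 && (rk e.1 < rk e.2)%N)
    + (adj e.2 e.1 && (rk e.2 < rk e.1)%N))%N); last first.
  move=> [u v] _ /=; rewrite (sym v u); case uv: (adj u v) => //=.
  by have := rk_neq uv; case: ltngtP.
rewrite big_split /=; congr (_ + _)%N.
by rewrite (reindex_inj (can_inj (@swap_pairK T T))).
Qed.

Lemma mxtrace_laplacian (C : numClosedFieldType) :
  \tr (laplacian C adj) = (2 * #|edges adj|)%:R.
Proof.
rewrite mxtrace_gentry -sum_deg natr_sum; apply: eq_bigr => u _.
by rewrite gentry_laplacian eqxx.
Qed.
End Handshake.

Theorem mainTheorem10 (C : numClosedFieldType) (a b : nat)
  (adj : rel ('I_a * 'I_b)) :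
  simple_graph adj ->
  (0 < #|edges adj|)%N ->
  row_stratified adj \/ col_stratified adj ->
  (separable (rho C adj) <-> degree_criterion adj).
Proof.
move=> simple m_gt0 stratified; have [sym irr] := simple.
split; first exact: degree_criterion_of_separable.
move=> dc; have laplacian_products : sum_of_products (gentry (laplacian C adj)).
  case: stratified => [rs|cs]; first exact: sum_of_products_laplacian_row.
  have := sum_of_products_laplacian_row C (simple_graph_transpose simple)
    (row_stratified_transpose cs) (degree_criterion_transpose sym dc).
  move/sum_of_products_transpose; apply: eq_sum_of_products => g h.
  by rewrite [RHS]gentry_laplacian_transpose.
have m2_neq0 : (2 * #|edges adj|)%:R != 0 :> C by rewrite pnatr_eq0 muln_eq0 -lt0n m_gt0.
apply: separable_of_sum_of_products.
  apply: eq_sum_of_products (sum_of_productsZ _ laplacian_products) => [g h|].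
    by rewrite /rho gentryZ.
  by rewrite invr_ge0 ler0n.
by rewrite /rho mxtraceZ mxtrace_laplacian // mulVf.
Qed.
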